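(* Fix an uncountable cardinal $\lambda$. If there is an adequate $\omega_1$-poset, then there are an adequate $\omega$-poset and an adequate $1$-poset.
   Context: For $s=\langle\alpha,\zeta\rangle$ write $\pi(s)=\alpha$, $\rho(s)=\zeta$. An LCS poset is a triple $\mathcal T=\langle T,\preceq,i\rangle$ such that: (1) $\langle T,\preceq\rangle$ is a partial order with $T=\bigcup\{T_\alpha:\alpha<\eta\}$ for a nonzero ordinal $\eta$, each $T_\alpha=\{\alpha\}\times A_\alpha$ with $A_\alpha$ a nonempty set of ordinals; (2) $s\prec t$ implies $\pi(s)<\pi(t)$; (3) if $\alpha<\beta<\eta$ and $t\in T_\beta$ then $\{s\in T_\alpha: s\prec t\}$ is infinite; (4) $i:[T]^2\to[T]^{<\omega}$ with, for all $\{s,t\}$: (a) $v\in i\{s,t\}$ implies $v\preceq s,t$; (b) if $u\preceq s,t$ then $u\preceq v$ for some $v\in i\{s,t\}$. Its cardinal sequence is $\langle|T_\alpha|:\alpha<\eta\rangle$. If $S\subseteq T$ satisfies $i\{s,t\}\subseteq S$ for all $\{s,t\}\in[S]^2$, the restriction $\mathcal T\restriction S$ is $\langle S,\preceq\cap(S\times S), i\restriction[S]^2\rangle$. For a sequence of cardinals $f$, an $f$-skeleton is an LCS poset with $T=\bigcup\{\{\alpha\}\times A_\alpha:\alpha<\eta\}$ and cardinal sequence $f$ such that for each $\alpha<\eta$ there is a countable $O_\alpha\in[A_\alpha]^\omega$ with: $s\prec t$ and $\pi(s)=\alpha$ imply $\rho(s)\in O_\alpha$; (i) if $s,t\in\{\alpha\}\times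 O_\alpha$, $\rho(s)\ne\rho(t)$, then $i\{s,t\}=\emptyset$; (ii) if $\alpha+1<\eta$, $t\in\{\alpha+1\}\times A_{\alpha+1}$ and $s\prec t$, then there is $u\in\{\alpha\}\times O_\alpha$ with $s\preceq u\prec t$. $\langle\kappa\rangle_\alpha$ is the constant sequence of length $\alpha$ with value $\kappa$, and ${}^\frown$ is concatenation. Fix an uncountable cardinal $\lambda$. For an ordinal $\gamma$ let $Y_\gamma = (\gamma\times\omega)\cup(\{\gamma,\gamma+1\}\times\lambda)$, with levels $\{\alpha\}\times\omega$ ($\alpha<\gamma$), $\{\gamma\}\times\lambda$, $\{\gamma+1\}\times\lambda$. Let $\mathbb B^{(\gamma)}_S=\gamma\times\omega$ and, for $\zeta<\lambda$, $\mathbb B^{(\gamma)}_\zeta = \{\gamma\}\times[\omega\cdot\zeta,\omega\cdot\zeta+\omega)\cup\{\langle\gamma+1,\zeta\rangle\}$ (ordinal arithmetic). An adequate $\gamma$-poset is an LCS poset $\langle T,\preceq,i\rangle$ with $T=Y_\gamma$ such that for every $\zeta<\lambda$: (1) if $x\in\mathbb B^{(\gamma)}_\zeta$ with $\pi(x)=\gamma$, then $x\prec\langle\gamma+1,\zeta\rangle$ and $x\not\prec\langle\gamma+1,\xi\rangle$ for all $\xi\ne\zeta$; (2) the restriction of $\mathcal T$ to $\mathbb B^{(\gamma)}_S\cup\mathbb B^{(\gamma)}_\zeta$ is a $\langle\omega\rangle_{\gamma+1}{}^\frown\langle1\rangle$-skeleton. *)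

From Stdlib Require Import List Arith.
Import ListNotations.
Set Implicit Arguments.

Definition countable_pred (T : Type) (P : T -> Prop) : Prop :=
  exists f : T -> nat, forall x y, P x -> P y -> f x = f y -> x = y.

Definition uncountable_type (T : Type) : Prop :=
  ~ countable_pred (fun _ : T => True).

Definition finite_pred (T : Type) (P : T -> Prop) : Prop :=
  exists l : list T, forall x, P x -> In x l.

Definition countably_infinite_pred (T : Type) (P : T -> Prop) : Prop :=
  exists f : nat -> T,
    (forall n, P (f n)) /\ (forall m n, f m = f n -> m = n) /\
    (forall x, P x -> exists n, f n = x).

Definition singleton_pred (T : Type) (P : T -> Prop) : Prop :=
  exists x, P x /\ forall y, P y -> y = x.

(* (W, ltW) is a well-ordering of order type omega_1: a well-founded strict
   total order which is uncountable, all of whose proper initial segments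
   are countable. *)
Definition is_omega1 (W : Type) (ltW : W -> W -> Prop) : Prop :=
  (forall x, ~ ltW x x) /\
  (forall x y z, ltW x y -> ltW y z -> ltW x z) /\
  (forall x y, ltW x y \/ x = y \/ ltW y x) /\
  well_founded ltW /\
  uncountable_type W /\
  (forall w, countable_pred (fun v => ltW v w)).

Section LCS.
Variables (T H : Type) (ltH : H -> H -> Prop) (pi : T -> H).

Definition strict (le : T -> T -> Prop) (s t : T) : Prop := le s t /\ s <> t.

(* <S, le restricted, i restricted> is an LCS poset whose height is the
   ordinal represented by (H, ltH), with levels { t in S | pi t = alpha }. *)
Definition LCS_on (S : T -> Prop) (le : T -> T -> Prop)
    (i : T -> T -> list T) : Prop :=
  (forall s, S s -> le s s) /\
  (forall s t, S s -> S t -> le s t -> le t s -> s = t) /\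
  (forall s t u, S s -> S t -> S u -> le s t -> le t u -> le s u) /\
  (forall a : H, exists t, S t /\ pi t = a) /\
  (forall s t, S s -> S t -> strict le s t -> ltH (pi s) (pi t)) /\
  (forall a b t, ltH a b -> S t -> pi t = b ->
     ~ finite_pred (fun s => S s /\ pi s = a /\ strict le s t)) /\
  (* (4) i is a function on unordered pairs [S]^2 with values in [S]^<omega *)
  (forall s t, S s -> S t -> s <> t ->
     (forall v, In v (i s t) <-> In v (i t s)) /\
     (forall v, In v (i s t) -> S v) /\
     (forall v, In v (i s t) -> le v s /\ le v t) /\
     (forall u, S u -> le u s -> le u t ->
                  exists v, In v (i s t) /\ le u v)).

(* S is closed under i, so that the restriction to S makes sense *)
Definition i_closed (S : T -> Prop) (i : T -> T -> list T) : Prop :=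
  forall s t, S s -> S t -> s <> t -> forall v, In v (i s t) -> S v.

Definition succH (a b : H) : Prop :=
  ltH a b /\ ~ (exists d, ltH a d /\ ltH d b).

(* The restriction to S is an f-skeleton, where the cardinal sequence f
   is given by the predicate card_ok : H -> (T -> Prop) -> Prop. *)
Definition skeleton_on (card_ok : H -> (T -> Prop) -> Prop)
    (S : T -> Prop) (le : T -> T -> Prop) (i : T -> T -> list T) : Prop :=
  LCS_on S le i /\
  (forall a, card_ok a (fun t => S t /\ pi t = a)) /\
  exists O : H -> T -> Prop,
    (forall a, (forall x, O a x -> S x /\ pi x = a) /\ countable_pred (O a)) /\
    (forall s t, S s -> S t -> strict le s t -> O (pi s) s) /\
    (forall a s t, O a s -> O a t -> s <> t -> i s t = []) /\
    (forall a b s t, succH a b -> S t -> pi t = b -> S s -> strict le s t ->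
       exists u, O a u /\ le s u /\ strict le u t).
End LCS.

(* The ordinal gamma is represented by a strict well-order (G, ltG); the
   height gamma + 2 is represented by hgt G. *)
Inductive hgt (G : Type) : Type :=
  | HLow : G -> hgt G      (* alpha < gamma *)
  | HMid : hgt G           (* gamma *)
  | HTop : hgt G.          (* gamma + 1 *)
Arguments HMid {G}. Arguments HTop {G}.

Definition ltHgt (G : Type) (ltG : G -> G -> Prop) (a b : hgt G) : Prop :=
  match a, b with
  | HLow x, HLow y => ltG x y
  | HLow _, HMid => True
  | HLow _, HTop => True
  | HMid, HTop => True
  | _, _ => False
  end.

(* Lambda is (a type of cardinality) lambda.
   Low a n  = <a, n>            (a < gamma, n < omega)
   Mid z n  = <gamma, omega*z+n> (z < lambda, n < omega); since lambda is an
              infinite cardinal, every ordinal < lambda is uniquely omega*z+n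
   Top z    = <gamma+1, z>      (z < lambda) *)
Inductive Ypt (G Lam : Type) : Type :=
  | Low : G -> nat -> Ypt G Lam
  | Mid : Lam -> nat -> Ypt G Lam
  | Top : Lam -> Ypt G Lam.
Arguments Low {G Lam}. Arguments Mid {G Lam}. Arguments Top {G Lam}.

Definition piY (G Lam : Type) (x : Ypt G Lam) : hgt G :=
  match x with
  | Low a _ => HLow a
  | Mid _ _ => HMid
  | Top _ => HTop
  end.

Definition BSz (G Lam : Type) (z : Lam) (x : Ypt G Lam) : Prop :=
  match x with
  | Low _ _ => True
  | Mid z' _ => z' = z
  | Top z' => z' = z
  end.

Definition card_seq_adequate (G Lam : Type) (a : hgt G)
    (P : Ypt G Lam -> Prop) : Prop :=
  match a with
  | HTop => singleton_pred P
  | _ => countably_infinite_pred P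
  end.

Definition adequate (G : Type) (ltG : G -> G -> Prop) (Lam : Type) : Prop :=
  exists (le : Ypt G Lam -> Ypt G Lam -> Prop)
         (i : Ypt G Lam -> Ypt G Lam -> list (Ypt G Lam)),
    LCS_on (ltHgt ltG) (@piY G Lam) (fun _ => True) le i /\
    forall z : Lam,
      (forall n, strict le (Mid z n) (Top z)) /\
      (forall n xi, xi <> z -> ~ strict le (Mid z n) (Top xi)) /\
      i_closed (BSz z) i /\
      skeleton_on (ltHgt ltG) (@piY G Lam) (@card_seq_adequate G Lam)
        (BSz z) le i.

From Stdlib Require Import Arith Lia List.
From Stdlib Require Import Classical ClassicalEpsilon FunctionalExtensionality PropExtensionality.
From Stdlib Require Cantor.
From Stdlib Require Import FinFun.
Import ListNotations.

(* The proof goes through the statement "lambda embeds into the Baire space",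
   which only depends on lambda and is expressed by a separating family of
   sequences [chi : Lam -> nat -> nat].
   (A) [adequate_separating]: in any adequate gamma-poset with gamma >= 1 and
       any level [w0 < gamma], the map sending [z] to the set of [k] with
       <w0,k> below <gamma+1,z> is injective.  The argument combines the
       finiteness of i{<gamma+1,z>, <gamma+1,xi>} with both skeleton conditions
       at level gamma.
   (B) [construction_adequate]: conversely, given a separating family and a
       "level tree" (an inverse tree of countable levels carrying labelled key
       nodes), we hang <gamma,omega*z+n> above the key nodes whose keys record
       [n] and a prefix of [chi z]; distinct [z] share only finitely many keys,
       which makes all meets finite, and the result is an adequate gamma-poset.
   (C) Level trees exist over omega ([omega_tree]) and over 1 ([one_tree]), so
       the proposition follows by combining (A) and (B). *)

Lemma injective_image_not_finite (T : Type) (P : T -> Prop) (f : nat -> T) :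
  Injective f -> (forall x, P (f x)) -> ~ finite_pred P.
Proof.
  intros Hinj HP [L HL].
  set (init := seq 0 (S (length L))).
  assert (Hnodup : NoDup (map f init)) by (apply Injective_map_NoDup, seq_NoDup; exact Hinj).
  assert (Hincl : incl (map f init) L).
  { intros y Hy. apply in_map_iff in Hy as [x [<- _]]. apply HL, HP. }
  pose proof (NoDup_incl_length Hnodup Hincl) as Hlen.
  unfold init in Hlen. rewrite length_map, length_seq in Hlen. lia.
Qed.

Lemma list_bound {T : Type} (L : list T) (R : T -> nat -> Prop) :
  (forall v, In v L -> exists n, R v n) ->
  exists N, forall v, In v L -> exists n, n < N /\ R v n.
Proof.
  induction L as [|a L IH]; intros H.
  - exists 0. simpl. tauto.
  - destruct IH as [N HN]; [intros v Hv; apply H; simpl; auto|].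
    destruct (H a (or_introl eq_refl)) as [na Ha].
    exists (S (N + na)). intros v [<-|Hv].
    + exists na. split; [lia|exact Ha].
    + destruct (HN v Hv) as [n [Hn Hr]]. exists n. split; [lia|exact Hr].
Qed.

(* A family of sequences separating the points of [Lam]: this is an injection
   of [Lam] into the Baire space. *)
Definition separating {Lam : Type} (chi : Lam -> nat -> nat) : Prop :=
  forall z z', z <> z' -> exists k, chi z k <> chi z' k.

Section Separation.
Variables (G Lam : Type) (ltG : G -> G -> Prop) (w0 : G).
Variables (le : Ypt G Lam -> Ypt G Lam -> Prop) (i : Ypt G Lam -> Ypt G Lam -> list (Ypt G Lam)).
Hypothesis Hlcs : LCS_on (ltHgt ltG) (@piY G Lam) (fun _ => True) le i.
Hypothesis Hadq : forall z : Lam,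
  (forall n, strict le (Mid z n) (Top z)) /\
  (forall n xi, xi <> z -> ~ strict le (Mid z n) (Top xi)) /\
  i_closed (BSz z) i /\
  skeleton_on (ltHgt ltG) (@piY G Lam) (@card_seq_adequate G Lam) (BSz z) le i.

Lemma sep_trans x y w : le x y -> le y w -> le x w.
Proof. destruct Hlcs as [_ [_ [Htr _]]]. exact (Htr x y w I I I). Qed.

Lemma Mid_below_own_Top z n : le (Mid z n) (Top z).
Proof. apply (proj1 (Hadq z)). Qed.

Lemma Mid_below_Top z' n z : le (Mid z' n) (Top z) -> z' = z.
Proof.
  intros H. apply NNPP. intros Hne. destruct (Hadq z') as [_ [Hnot _]].
  apply (Hnot n z); [congruence|]. split; [exact H|discriminate].
Qed.

Lemma Top_below_Top z' z : le (Top z') (Top z) -> z' = z.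
Proof.
  intros H. apply NNPP. intros Hne. destruct Hlcs as [_ [_ [_ [_ [Hlev _]]]]].
  apply (Hlev (Top z') (Top z) I I). split; [exact H|congruence].
Qed.

(* Skeleton condition (ii) at level gamma: whatever lies below [Top z] at a
   level below gamma lies below some [Mid z n]. *)
Lemma Low_below_Top a k z :
  le (Low a k) (Top z) -> exists n, le (Low a k) (Mid z n).
Proof.
  intros H. destruct (Hadq z) as [_ [_ [_ [_ [_ [O [HO [_ [_ Hii]]]]]]]]].
  assert (Hsucc : succH (ltHgt ltG) HMid HTop).
  { split; [exact I|]. intros [[d| |] [H1 H2]]; exact H2 || exact H1. }
  destruct (Hii HMid HTop (Low a k) (Top z) Hsucc eq_refl eq_refl I) as [u [Hu [Hku _]]].
  { split; [exact H|discriminate]. }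
  destruct (proj1 (HO HMid) u Hu) as [Hub Hup].
  destruct u as [|z' n|]; try discriminate. simpl in Hub. subst z'.
  exists n. exact Hku.
Qed.

(* Skeleton condition (i) at level gamma: distinct [Mid z n] have no common
   lower bound. *)
Lemma Mid_no_common_lower z n m u :
  n <> m -> le u (Mid z n) -> le u (Mid z m) -> False.
Proof.
  intros Hnm Hn Hm.
  destruct (Hadq z) as [HMT [_ [_ [_ [_ [O [_ [HOlev [Hi _]]]]]]]]].
  assert (Hnil : i (Mid z n) (Mid z m) = []).
  { apply (Hi HMid); [| |congruence].
    - exact (HOlev (Mid z n) (Top z) eq_refl eq_refl (HMT n)).
    - exact (HOlev (Mid z m) (Top z) eq_refl eq_refl (HMT m)). }
  destruct Hlcs as [_ [_ [_ [_ [_ [_ H4]]]]]].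
  destruct (H4 (Mid z n) (Mid z m) I I ltac:(congruence)) as [_ [_ [_ Hmeet]]].
  destruct (Hmeet u I Hn Hm) as [v [Hv _]]. rewrite Hnil in Hv. exact Hv.
Qed.

(* LCS condition (3): level [w0] has points below each [Mid z N]. *)
Lemma Low_below_Mid z N : exists k, le (Low w0 k) (Mid z N).
Proof.
  apply NNPP. intros Hno. destruct Hlcs as [_ [_ [_ [_ [_ [H3 _]]]]]].
  apply (H3 (HLow w0) HMid (Mid z N) I I eq_refl). exists [].
  intros [a k| |] [_ [Hs [Hle _]]]; try discriminate.
  injection Hs as ->. apply Hno. exists k. exact Hle.
Qed.

Lemma common_lower_of_Tops z xi v :
  z <> xi -> le v (Top z) -> le v (Top xi) -> exists n, le v (Mid z n).
Proof.
  intros Hne Hz Hxi. destruct v as [a k|z' n'|z'].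
  - exact (Low_below_Top a k z Hz).
  - exfalso. apply Hne. rewrite <- (Mid_below_Top _ _ _ Hz). exact (Mid_below_Top _ _ _ Hxi).
  - exfalso. apply Hne. rewrite <- (Top_below_Top _ _ Hz). exact (Top_below_Top _ _ Hxi).
Qed.

(* The key point: distinct tops have distinct traces on level [w0].  Otherwise
   the finite meet list [i (Top z) (Top xi)] would lie below finitely many
   [Mid z n], n < N, and a point of level [w0] below [Mid z N] would be a
   common lower bound of [Mid z N] and some [Mid z n]. *)
Lemma Top_traces_differ z xi :
  z <> xi -> exists k, ~ (le (Low w0 k) (Top z) <-> le (Low w0 k) (Top xi)).
Proof.
  intros Hne. apply NNPP. intros Hsame.
  assert (Hsub : forall k, le (Low w0 k) (Top z) -> le (Low w0 k) (Top xi)).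
  { intros k Hk. apply NNPP. intros Hk'. apply Hsame. exists k. tauto. }
  destruct Hlcs as [_ [_ [_ [_ [_ [_ H4]]]]]].
  destruct (H4 (Top z) (Top xi) I I ltac:(congruence)) as [_ [_ [Hlow Hmeet]]].
  destruct (list_bound (i (Top z) (Top xi)) (fun v n => le v (Mid z n))) as [N HN].
  { intros v Hv. destruct (Hlow v Hv). eapply common_lower_of_Tops; eauto. }
  destruct (Low_below_Mid z N) as [k Hk].
  assert (HkT : le (Low w0 k) (Top z)) by exact (sep_trans _ _ _ Hk (Mid_below_own_Top z N)).
  destruct (Hmeet (Low w0 k) I HkT (Hsub k HkT)) as [v [Hv Hkv]].
  destruct (HN v Hv) as [n [Hn Hvn]].
  exact (Mid_no_common_lower z n N _ ltac:(lia) (sep_trans _ _ _ Hkv Hvn) Hk).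
Qed.

End Separation.

Lemma adequate_separating {G Lam : Type} {ltG : G -> G -> Prop} (w0 : G) :
  adequate ltG Lam -> exists chi : Lam -> nat -> nat, separating chi.
Proof.
  intros [le [i [Hlcs Hadq]]].
  exists (fun z k => if excluded_middle_informative (le (Low w0 k) (Top z)) then 1 else 0).
  intros z xi Hne. destruct (@Top_traces_differ G Lam ltG w0 le i Hlcs Hadq z xi Hne) as [k Hk].
  exists k.
  destruct (excluded_middle_informative (le (Low w0 k) (Top z)));
  destruct (excluded_middle_informative (le (Low w0 k) (Top xi))); tauto || discriminate.
Qed.

Definition meet_list {T : Type} (le : T -> T -> Prop) (s t : T) (L : list T) : Prop :=
  (forall v, In v L -> le v s /\ le v t) /\
  (forall u, le u s -> le u t -> exists v, In v L /\ le u v).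

(* A chosen meet list, whenever one exists; this is the function [i]. *)
Definition meets {T : Type} (le : T -> T -> Prop) (s t : T) : list T :=
  epsilon (inhabits []) (meet_list le s t).

Lemma meets_sym {T : Type} (le : T -> T -> Prop) s t : meets le s t = meets le t s.
Proof.
  unfold meets. f_equal. extensionality L. apply propositional_extensionality.
  unfold meet_list. split; intros [Hlow Hcof]; split;
    [intros v Hv; destruct (Hlow v Hv); tauto| intros u Hs Ht; apply Hcof; assumption
    |intros v Hv; destruct (Hlow v Hv); tauto| intros u Hs Ht; apply Hcof; assumption].
Qed.

Lemma meets_spec {T : Type} (le : T -> T -> Prop) s t :
  (exists L, meet_list le s t L) -> meet_list le s t (meets le s t).
Proof. intros H. unfold meets. apply epsilon_spec. exact H. Qed.

Lemma meets_nil {T : Type} (le : T -> T -> Prop) s t :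
  (forall u, le u s -> le u t -> False) -> meets le s t = [].
Proof.
  intros Hno.
  assert (Hspec : meet_list le s t (meets le s t)).
  { apply meets_spec. exists []. split; [simpl; tauto|]. intros u Hs Ht. exfalso; eauto. }
  destruct (meets le s t) as [|v L]; [reflexivity|].
  exfalso. destruct (proj1 Hspec v (or_introl eq_refl)). eauto.
Qed.

Definition covering {T : Type} (le : T -> T -> Prop) (s t : T) (C : list T) : Prop :=
  forall u, le u s -> le u t -> exists v, In v C /\ le v s /\ le v t /\ le u v.

Lemma covering_sym {T : Type} (le : T -> T -> Prop) s t C :
  covering le s t C -> covering le t s C.
Proof. intros H u Ht Hs. destruct (H u Hs Ht) as [v Hv]. exists v. tauto. Qed.

Lemma meet_list_of_covering {T : Type} (le : T -> T -> Prop) s t C :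
  covering le s t C -> exists L, meet_list le s t L.
Proof.
  intros HC.
  assert (Hfilter : forall C' : list T, exists L,
            forall v, In v L <-> In v C' /\ le v s /\ le v t).
  { induction C' as [|a C' [L HL]]; [exists []; simpl; tauto|].
    destruct (classic (le a s /\ le a t)) as [Ha|Ha].
    - exists (a :: L). intros v. simpl. rewrite HL. split.
      + intros [<-|Hv]; tauto.
      + intros [[<-|Hv] Hst]; tauto.
    - exists L. intros v. simpl. rewrite HL. split; [tauto|].
      intros [[<-|Hv] Hst]; tauto. }
  destruct (Hfilter C) as [L HL]. exists L. split.
  - intros v Hv. apply HL in Hv. tauto.
  - intros u Hs Ht. destruct (HC u Hs Ht) as [v [Hv [Hvs [Hvt Huv]]]].
    exists v. split; [apply HL; tauto|exact Huv].
Qed.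

Definition cpair (a b : nat) : nat := Cantor.to_nat (a, b).

Lemma of_nat_cpair a b : Cantor.of_nat (cpair a b) = (a, b).
Proof. apply Cantor.cancel_of_to. Qed.

Lemma cpair_inj a b c d : cpair a b = cpair c d -> a = c /\ b = d.
Proof.
  intros H. apply (f_equal Cantor.of_nat) in H. rewrite !of_nat_cpair in H.
  injection H. auto.
Qed.

Fixpoint prefix_code (f : nat -> nat) (m : nat) : nat :=
  match m with 0 => 0 | S m => S (cpair (f m) (prefix_code f m)) end.

Lemma prefix_code_inj f g m m' :
  prefix_code f m = prefix_code g m' -> m = m' /\ forall k, k < m -> f k = g k.
Proof.
  revert m'. induction m as [|m IH]; intros [|m'] H; simpl in H; try discriminate.
  - split; [reflexivity|intros; lia].
  - injection H as H. apply cpair_inj in H as [Hlast Hinit].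
    apply IH in Hinit as [-> Hinit]. split; [reflexivity|].
    intros k Hk. destruct (Nat.eq_dec k m') as [->|]; [exact Hlast|]. apply Hinit. lia.
Qed.

Definition col_key {Lam : Type} (chi : Lam -> nat -> nat) (z : Lam) (n j : nat) : nat :=
  cpair n (prefix_code (chi z) (n + j)).

Lemma col_key_inj {Lam : Type} (chi : Lam -> nat -> nat) z n j z' n' j' :
  col_key chi z n j = col_key chi z' n' j' -> n = n' /\ j = j'.
Proof.
  unfold col_key. intros H. apply cpair_inj in H as [-> H].
  apply prefix_code_inj in H as [H _]. split; [reflexivity|lia].
Qed.

Lemma col_key_overlap {Lam : Type} (chi : Lam -> nat -> nat) z z' :
  separating chi -> z <> z' ->
  exists d, forall n j n' j', col_key chi z n j = col_key chi z' n' j' -> n + j <= d.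
Proof.
  intros Hsep Hz. destruct (Hsep z z' Hz) as [d Hd]. exists d.
  intros n j n' j' H. unfold col_key in H. apply cpair_inj in H as [-> H].
  apply prefix_code_inj in H as [_ H].
  destruct (Nat.le_gt_cases (n' + j) d) as [Hle|Hgt]; [exact Hle|].
  exfalso. apply Hd, H. exact Hgt.
Qed.

(* A level tree over an ordinal: the part of the construction below level
   gamma. *)
Record LevelTree := {
  lvl : Type;
  lvl_lt : lvl -> lvl -> Prop;
  nle : lvl -> nat -> lvl -> nat -> Prop;
  key_lvl : nat -> lvl;
  key_code : nat -> nat;
  lvl_lt_irrefl : forall a, ~ lvl_lt a a;
  nle_refl : forall a k, nle a k a k;
  nle_antisym : forall a k b l, nle a k b l -> nle b l a k -> a = b /\ k = l;
  nle_trans : forall a k b l c m, nle a k b l -> nle b l c m -> nle a k c m;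
  nle_level : forall a k b l, nle a k b l -> ~ (a = b /\ k = l) -> lvl_lt a b;
  nle_tree : forall c w a k b l, nle c w a k -> nle c w b l -> nle a k b l \/ nle b l a k;
  nle_infinite : forall a b l, lvl_lt a b ->
    exists f : nat -> nat, Injective f /\ forall x, nle a (f x) b l;
  key_separated : forall j e j' e' b l,
    nle (key_lvl j) (key_code e) b l -> nle (key_lvl j') (key_code e') b l -> e = e';
  keys_infinite : forall a (g : nat -> nat), Injective g ->
    exists f : nat -> nat, Injective f /\
      forall x, exists j, nle a (f x) (key_lvl j) (key_code (g j));
  nle_successor : forall a b, succH lvl_lt a b -> forall c w l,
    nle c w b l -> ~ (c = b /\ w = l) -> exists k, nle c w a k /\ nle a k b l;
  maximal_level_unique : forall a, (forall b, ~ lvl_lt a b) -> forall b, b = a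
}.

Section Construction.
Variables (Lam : Type) (chi : Lam -> nat -> nat) (F : LevelTree).

Local Notation Y := (Ypt (lvl F) Lam).

Definition below_col (z : Lam) (n : nat) (a : lvl F) (k : nat) : Prop :=
  exists j, nle F a k (key_lvl F j) (key_code F (col_key chi z n j)).

Definition col_node (z : Lam) (n j : nat) : Y :=
  Low (key_lvl F j) (key_code F (col_key chi z n j)).

Definition yle (x y : Y) : Prop :=
  match x, y with
  | Low a k, Low b l => nle F a k b l
  | Low a k, Mid z n => below_col z n a k
  | Low a k, Top z => exists n, below_col z n a k
  | Mid z n, Mid z' n' => z = z' /\ n = n'
  | Mid z _, Top z' => z = z'
  | Top z, Top z' => z = z'
  | _, _ => False
  end.

Lemma below_col_common z n z' n' a k :
  below_col z n a k -> below_col z' n' a k ->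
  exists j, col_key chi z n j = col_key chi z' n' j /\
            nle F a k (key_lvl F j) (key_code F (col_key chi z n j)).
Proof.
  intros [j Hj] [j' Hj'].
  assert (He : col_key chi z n j = col_key chi z' n' j').
  { destruct (nle_tree F _ _ _ _ _ _ Hj Hj') as [H|H].
    - exact (key_separated F _ _ _ _ _ _ H (nle_refl F _ _)).
    - exact (key_separated F _ _ _ _ _ _ (nle_refl F _ _) H). }
  destruct (col_key_inj chi _ _ _ _ _ _ He) as [_ <-]. exists j. auto.
Qed.

Lemma below_col_unique z n n' a k : below_col z n a k -> below_col z n' a k -> n = n'.
Proof.
  intros Hn Hn'. destruct (below_col_common z n z n' a k Hn Hn') as [j [He _]].
  exact (proj1 (col_key_inj chi _ _ _ _ _ _ He)).
Qed.

Lemma below_col_down z n a k c w : nle F c w a k -> below_col z n a k -> below_col z n c w.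
Proof. intros H [j Hj]. exists j. eapply nle_trans; eauto. Qed.

Lemma yle_refl x : yle x x.
Proof. destruct x; simpl; auto using nle_refl. Qed.

Lemma yle_trans x y w : yle x y -> yle y w -> yle x w.
Proof.
  destruct x, y, w; simpl; intros H1 H2; try contradiction;
    repeat match goal with H : _ /\ _ |- _ => destruct H end; subst; auto.
  - eapply nle_trans; eauto.
  - eapply below_col_down; eauto.
  - destruct H2 as [m Hm]. exists m. eapply below_col_down; eauto.
  - eexists; eauto.
Qed.

Lemma yle_antisym x y : yle x y -> yle y x -> x = y.
Proof.
  destruct x, y; simpl; intros H1 H2; try contradiction;
    repeat match goal with H : _ /\ _ |- _ => destruct H end; subst; auto.
  destruct (nle_antisym F _ _ _ _ H1 H2); subst; auto.
Qed.

Lemma yle_level x y : strict yle x y -> ltHgt (lvl_lt F) (piY x) (piY y).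
Proof.
  unfold strict. destruct x, y; simpl; intros [H1 H2]; try contradiction;
    repeat match goal with H : _ /\ _ |- _ => destruct H end; subst; auto.
  apply (nle_level F _ _ _ _ H1). intros [-> ->]. auto.
Qed.

(* Down-closed sets; [B_S ∪ B_z] is one, so [i] restricts to it. *)
Definition down_closed (S : Y -> Prop) : Prop := forall s t, S t -> yle s t -> S s.

Lemma BSz_down_closed z : down_closed (BSz z).
Proof.
  intros s t Ht H. destruct s, t; simpl in *; try contradiction;
    repeat match goal with H : _ /\ _ |- _ => destruct H end; subst; auto.
Qed.

Lemma column_infinite z n a :
  exists f : nat -> nat, Injective f /\ forall x, below_col z n a (f x).
Proof.
  apply keys_infinite. intros j j' H. exact (proj2 (col_key_inj chi _ _ _ _ _ _ H)).
Qed.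

Lemma infinitely_many_below (a : hgt (lvl F)) (t : Y) :
  ltHgt (lvl_lt F) a (piY t) ->
  exists f : nat -> Y, Injective f /\ forall x, piY (f x) = a /\ strict yle (f x) t.
Proof.
  destruct t as [b l|z n|z], a as [a| |]; simpl; intros Hab; try contradiction.
  - destruct (nle_infinite F _ _ l Hab) as [f [Hf Hle]].
    exists (fun x => Low a (f x)). split; [intros x y H; injection H; apply Hf|].
    intros x. split; [reflexivity|]. split; [exact (Hle x)|].
    intros H. injection H as <- _. exact (lvl_lt_irrefl F _ Hab).
  - destruct (column_infinite z n a) as [f [Hf Hle]].
    exists (fun x => Low a (f x)). split; [intros x y H; injection H; apply Hf|].
    intros x. repeat split; [exact (Hle x)|discriminate].
  - destruct (column_infinite z 0 a) as [f [Hf Hle]].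
    exists (fun x => Low a (f x)). split; [intros x y H; injection H; apply Hf|].
    intros x. repeat split; [exists 0; exact (Hle x)|discriminate].
  - exists (fun x => Mid z x). split; [intros x y H; injection H; auto|].
    intros x. repeat split; discriminate.
Qed.

Lemma yle_not_finite_below (S : Y -> Prop) : down_closed S ->
  forall a b t, ltHgt (lvl_lt F) a b -> S t -> piY t = b ->
    ~ finite_pred (fun s => S s /\ piY s = a /\ strict yle s t).
Proof.
  intros HS a b t Hab Ht <-. destruct (infinitely_many_below a t Hab) as [f [Hf Hbelow]].
  apply (injective_image_not_finite _ _ f Hf). intros x.
  destruct (Hbelow x) as [Hlev Hlt]. split; [exact (HS _ _ Ht (proj1 Hlt))|tauto].
Qed.

Definition grid (z : Lam) (d : nat) : list Y :=
  flat_map (fun n => map (fun j => col_node z n j) (seq 0 (S d))) (seq 0 (S d)).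

Lemma in_grid z d n j : n <= d -> j <= d -> In (col_node z n j) (grid z d).
Proof.
  intros Hn Hj. unfold grid. apply in_flat_map. exists n.
  split; [apply in_seq; lia|]. apply in_map. apply in_seq. lia.
Qed.

Hypothesis Hsep : separating chi.

Lemma columns_meet_in_grid z z' : z <> z' ->
  exists d, forall a k n n', below_col z n a k -> below_col z' n' a k ->
    exists v, In v (grid z d) /\ yle v (Mid z n) /\ yle v (Mid z' n') /\ yle (Low a k) v.
Proof.
  intros Hz. destruct (col_key_overlap chi z z' Hsep Hz) as [d Hd]. exists d.
  intros a k n n' H H'. destruct (below_col_common _ _ _ _ _ _ H H') as [j [He Hj]].
  pose proof (Hd _ _ _ _ He). exists (col_node z n j).
  split; [apply in_grid; lia|]. split; [exists j; apply nle_refl|].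
  split; [exists j; rewrite He; apply nle_refl|]. exact Hj.
Qed.

Lemma covering_Low_Low a k b l : exists C, covering yle (Low a k) (Low b l) C.
Proof.
  exists [Low a k; Low b l]. intros [c w| |] H1 H2; simpl in *; try contradiction.
  destruct (nle_tree F _ _ _ _ _ _ H1 H2) as [H|H].
  - exists (Low a k). simpl. repeat split; auto using nle_refl.
  - exists (Low b l). simpl. repeat split; auto using nle_refl.
Qed.

(* A node below [(a, k)] carrying a key of column [(z, n)] is unique, so
   [(a, k)] and that node cover the common lower bounds. *)
Lemma covering_Low_Mid a k z n : exists C, covering yle (Low a k) (Mid z n) C.
Proof.
  destruct (classic (exists j, nle F (key_lvl F j) (key_code F (col_key chi z n j)) a k))
    as [[j0 Hj0]|Hno].
  - exists [Low a k; col_node z n j0]. intros [c w| |] H1 H2; simpl in *; try contradiction.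
    destruct H2 as [j Hj].
    destruct (nle_tree F _ _ _ _ _ _ H1 Hj) as [H|H].
    + exists (Low a k). simpl. repeat split; auto using nle_refl. exists j. exact H.
    + destruct (col_key_inj chi _ _ _ _ _ _ (key_separated F _ _ _ _ _ _ H Hj0)) as [_ <-].
      exists (col_node z n j). simpl. repeat split; auto. exists j. apply nle_refl.
  - exists [Low a k]. intros [c w| |] H1 H2; simpl in *; try contradiction.
    destruct H2 as [j Hj].
    destruct (nle_tree F _ _ _ _ _ _ H1 Hj) as [H|H].
    + exists (Low a k). simpl. repeat split; auto using nle_refl. exists j. exact H.
    + exfalso. eauto.
Qed.

(* As above, for all columns of [z] at once: the key also determines [n]. *)
Lemma covering_Low_Top a k z : exists C, covering yle (Low a k) (Top z) C.
Proof.
  destruct (classic (exists n j, nle F (key_lvl F j) (key_code F (col_key chi z n j)) a k))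
    as [[n0 [j0 Hj0]]|Hno].
  - exists [Low a k; col_node z n0 j0].
    intros [c w| |] H1 H2; simpl in *; try contradiction.
    destruct H2 as [n [j Hj]].
    destruct (nle_tree F _ _ _ _ _ _ H1 Hj) as [H|H].
    + exists (Low a k). simpl. repeat split; auto using nle_refl. exists n, j. exact H.
    + destruct (col_key_inj chi _ _ _ _ _ _ (key_separated F _ _ _ _ _ _ H Hj0)) as [<- <-].
      exists (col_node z n j). simpl. repeat split; auto. exists n, j. apply nle_refl.
  - exists [Low a k]. intros [c w| |] H1 H2; simpl in *; try contradiction.
    destruct H2 as [n [j Hj]].
    destruct (nle_tree F _ _ _ _ _ _ H1 Hj) as [H|H].
    + exists (Low a k). simpl. repeat split; auto using nle_refl. exists n, j. exact H.
    + exfalso. eauto.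
Qed.

(* Columns of one point have disjoint down-sets; columns of distinct points
   meet below the grid. *)
Lemma covering_Mid_Mid z n z' n' :
  @Mid (lvl F) Lam z n <> Mid z' n' -> exists C, covering yle (Mid z n) (Mid z' n') C.
Proof.
  intros Hne. destruct (classic (z = z')) as [<-|Hz].
  - exists []. intros [c w|z1 n1|] H1 H2; simpl in *; try contradiction.
    + exfalso. apply Hne. rewrite (below_col_unique _ _ _ _ _ H1 H2). reflexivity.
    + exfalso. destruct H1 as [-> ->], H2 as [_ ->]. auto.
  - destruct (columns_meet_in_grid z z' Hz) as [d Hd]. exists (grid z d).
    intros [c w|z1 n1|] H1 H2; simpl in *; try contradiction.
    + apply Hd; assumption.
    + exfalso. destruct H1 as [-> _], H2 as [-> _]. auto.
Qed.

Lemma covering_Mid_Top z n z' : exists C, covering yle (Mid z n) (Top z') C.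
Proof.
  destruct (classic (z = z')) as [<-|Hz].
  - exists [Mid z n]. intros u H1 H2. exists (Mid z n). simpl. repeat split; auto.
  - destruct (columns_meet_in_grid z z' Hz) as [d Hd]. exists (grid z d).
    intros [c w|z1 n1|] H1 H2; simpl in *; try contradiction.
    + destruct H2 as [m Hm]. destruct (Hd _ _ _ _ H1 Hm) as [v [Hv [Hvz [Hvz' Hle]]]].
      exists v. repeat split; auto. exact (yle_trans v (Mid z' m) (Top z') Hvz' eq_refl).
    + exfalso. destruct H1 as [-> _]. auto.
Qed.

Lemma covering_Top_Top z z' :
  @Top (lvl F) Lam z <> Top z' -> exists C, covering yle (Top z) (Top z') C.
Proof.
  intros Hne. assert (Hz : z <> z') by congruence.
  destruct (columns_meet_in_grid z z' Hz) as [d Hd]. exists (grid z d).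
  intros [c w|z1 n1|z1] H1 H2; simpl in *; try (exfalso; congruence).
  destruct H1 as [n Hn], H2 as [m Hm]. destruct (Hd _ _ _ _ Hn Hm) as [v [Hv [Hvz [Hvz' Hle]]]].
  exists v. repeat split; auto.
  - exact (yle_trans v (Mid z n) (Top z) Hvz eq_refl).
  - exact (yle_trans v (Mid z' m) (Top z') Hvz' eq_refl).
Qed.

Lemma meet_list_exists (s t : Y) : s <> t -> exists L, meet_list yle s t L.
Proof.
  intros Hne. cut (exists C, covering yle s t C).
  { intros [C HC]. exact (meet_list_of_covering _ _ _ _ HC). }
  destruct s as [a k|z n|z], t as [b l|z' n'|z'].
  - apply covering_Low_Low.
  - apply covering_Low_Mid.
  - apply covering_Low_Top.
  - destruct (covering_Low_Mid b l z n) as [C HC]. exists C. apply covering_sym, HC.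
  - apply covering_Mid_Mid. exact Hne.
  - apply covering_Mid_Top.
  - destruct (covering_Low_Top b l z) as [C HC]. exists C. apply covering_sym, HC.
  - destruct (covering_Mid_Top z' n' z) as [C HC]. exists C. apply covering_sym, HC.
  - apply covering_Top_Top. exact Hne.
Qed.

Lemma meets_lower s t v : s <> t -> In v (meets yle s t) -> yle v s /\ yle v t.
Proof. intros Hne Hv. exact (proj1 (meets_spec _ _ _ (meet_list_exists s t Hne)) v Hv). Qed.

Lemma yle_LCS_on (S : Y -> Prop) : down_closed S -> (forall a, exists t, S t /\ piY t = a) ->
  LCS_on (ltHgt (lvl_lt F)) (@piY (lvl F) Lam) S yle (meets yle).
Proof.
  intros HS Hlev.
  split; [intros; apply yle_refl|].
  split; [intros; eapply yle_antisym; eauto|].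
  split; [intros; eapply yle_trans; eauto|].
  split; [exact Hlev|].
  split; [intros; apply yle_level; assumption|].
  split; [exact (yle_not_finite_below S HS)|].
  intros s t Hs Ht Hne.
  destruct (meets_spec _ _ _ (meet_list_exists s t Hne)) as [Hlow Hcof].
  split; [intros v; rewrite meets_sym; tauto|].
  split; [intros v Hv; exact (HS _ _ Hs (proj1 (Hlow v Hv)))|].
  split; [exact Hlow|].
  intros u _. apply Hcof.
Qed.

Lemma BSz_level_card z a : card_seq_adequate a (fun t : Y => BSz z t /\ piY t = a).
Proof.
  destruct a as [a| |]; simpl.
  - exists (fun k => Low a k). repeat split.
    + intros m m' H. injection H. auto.
    + intros [c k| |] [_ Hlev]; simpl in Hlev; try discriminate.
      injection Hlev as ->. eauto.
  - exists (fun k => Mid z k). repeat split.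
    + intros m m' H. injection H. auto.
    + intros [|z' k|] [Hz Hlev]; simpl in *; try discriminate. subst. eauto.
  - exists (Top z). repeat split.
    intros [| |z'] [Hz Hlev]; simpl in *; try discriminate. subst. reflexivity.
Qed.

(* Within one level of [B_S ∪ B_z] a point is determined by its index. *)
Definition index_of (x : Y) : nat :=
  match x with Low _ k => k | Mid _ n => n | Top _ => 0 end.

Lemma BSz_level_countable z a : countable_pred (fun x : Y => BSz z x /\ piY x = a).
Proof.
  exists index_of. intros x y [Hx Hxa] [Hy Hya] He.
  destruct x, y; simpl in *; subst; try discriminate; try (injection Hya; intros; subst); auto.
Qed.

Lemma BSz_level_disjoint z s t u : BSz z s -> BSz z t -> piY s = piY t -> s <> t ->
  yle u s -> yle u t -> False.
Proof.
  intros Hs Ht Hlev Hne Hus Hut.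
  destruct s as [c k|z1 n1|z1], t as [c' k'|z2 n2|z2]; simpl in *; try discriminate.
  - injection Hlev as <-. destruct u as [e w| |]; simpl in *; try contradiction.
    destruct (nle_tree F _ _ _ _ _ _ Hus Hut) as [H|H];
      apply (lvl_lt_irrefl F c); apply (nle_level F _ _ _ _ H); intros [_ ->]; auto.
  - subst. destruct u as [e w|z3 n3|]; simpl in *; try contradiction.
    + apply Hne. rewrite (below_col_unique _ _ _ _ _ Hus Hut). reflexivity.
    + destruct Hus as [_ <-], Hut as [_ <-]. auto.
  - subst. auto.
Qed.

Lemma BSz_successor_interpolation z a b s t :
  succH (ltHgt (lvl_lt F)) a b -> BSz z t -> piY t = b -> strict yle s t ->
  exists u, (BSz z u /\ piY u = a) /\ yle s u /\ strict yle u t.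
Proof.
  intros [Hab Hno] Ht Hb [Hst Hne].
  destruct t as [b' l|z2 n2|z2]; simpl in Hb; subst b.
  - destruct a as [a| |]; simpl in Hab; try contradiction.
    assert (Hsucc : succH (lvl_lt F) a b').
    { split; [exact Hab|]. intros [d [H1 H2]]. apply Hno. exists (HLow d). simpl. auto. }
    destruct s as [c w| |]; simpl in Hst; try contradiction.
    destruct (nle_successor F _ _ Hsucc c w l Hst) as [k [Hk1 Hk2]].
    { intros [-> ->]. exact (Hne eq_refl). }
    exists (Low a k). simpl. repeat split; auto.
    intros H. injection H as -> _. exact (lvl_lt_irrefl F _ Hab).
  - destruct a as [a| |]; simpl in Hab; try contradiction.
    assert (Hmax : forall d, ~ lvl_lt F a d).
    { intros d Had. apply Hno. exists (HLow d). simpl. auto. }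
    destruct s as [c w|z3 n3|]; simpl in Hst; try contradiction.
    2: { destruct Hst as [-> ->]. contradiction. }
    rewrite (maximal_level_unique F a Hmax c) in *.
    exists (Low a w). simpl. repeat split; auto using nle_refl.
  - destruct a as [a| |]; simpl in Hab; try contradiction.
    + exfalso. apply Hno. exists HMid. simpl. auto.
    + simpl in Ht. subst z2. destruct s as [c w|z3 n3|]; simpl in Hst; try contradiction.
      * destruct Hst as [n Hn]. exists (Mid z n). simpl. repeat split; auto. discriminate.
      * subst z3. exists (Mid z n3). simpl. repeat split; auto.
      * subst. contradiction.
Qed.

(* The constructed poset is an adequate gamma-poset ([z0] witnesses that the
   levels gamma and gamma + 1 are nonempty). *)
Lemma construction_adequate (z0 : Lam) : adequate (lvl_lt F) Lam.
Proof.
  assert (Hlevels : forall z a, exists t : Y, BSz z t /\ piY t = a).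
  { intros z [a| |]; [exists (Low a 0)|exists (Mid z 0)|exists (Top z)]; simpl; auto. }
  exists yle, (meets yle). split.
  - apply yle_LCS_on; [intros s t _ _; exact I|]. intros a.
    destruct (Hlevels z0 a) as [t [_ Ht]]. exists t. auto.
  - intros z. split; [|split; [|split]].
    + intros n. split; [reflexivity|discriminate].
    + intros n xi Hxi [H _]. exact (Hxi (eq_sym H)).
    + intros s t Hs _ Hne v Hv.
      exact (BSz_down_closed z _ _ Hs (proj1 (meets_lower s t v Hne Hv))).
    + split; [exact (yle_LCS_on _ (BSz_down_closed z) (Hlevels z))|].
      split; [exact (BSz_level_card z)|].
      exists (fun a x => BSz z x /\ piY x = a). split; [|split; [|split]].
      * intros a. split; [auto|exact (BSz_level_countable z a)].
      * intros s t Hs _ _. auto.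
      * intros a s t [Hs Hsa] [Ht Hta] Hne. apply meets_nil. intros u.
        exact (BSz_level_disjoint z s t u Hs Ht (eq_trans Hsa (eq_sym Hta)) Hne).
      * intros a b s t Hsucc Ht Hb _.
        exact (BSz_successor_interpolation z a b s t Hsucc Ht Hb).
Qed.

End Construction.

(* A node index codes a pair (tag, stack); the
   node above [(a, k)] on level [a + 1] has the same tag and the stack of [k]
   popped, and the [x]-th child of a node pushes [x].  Tags are thus constant
   along branches, and the key node of key [e] on level [j] has tag [S e]. *)
Definition tag (k : nat) : nat := fst (Cantor.of_nat k).
Definition stack (k : nat) : nat := snd (Cantor.of_nat k).
Definition parent (k : nat) : nat := cpair (tag k) (stack (stack k)).
Definition child (x c : nat) : nat := cpair (tag c) (cpair x (stack c)).

Lemma parent_child x c : parent (child x c) = c.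
Proof.
  unfold parent, child, tag, stack. rewrite !of_nat_cpair. cbn [fst snd].
  rewrite of_nat_cpair. cbn [fst snd]. unfold cpair.
  rewrite <- surjective_pairing. apply Cantor.cancel_to_of.
Qed.

Lemma child_inj x y c : child x c = child y c -> x = y.
Proof. unfold child. intros H. apply cpair_inj in H as [_ H]. apply cpair_inj in H. tauto. Qed.

Lemma tag_iter_parent n k : tag (Nat.iter n parent k) = tag k.
Proof.
  induction n as [|n IH]; [reflexivity|]. simpl.
  unfold tag at 1, parent at 1. rewrite of_nat_cpair. exact IH.
Qed.

Lemma iter_parent_child n c : Nat.iter n parent (Nat.iter n (child 0) c) = c.
Proof.
  revert c. induction n as [|n IH]; intros c; [reflexivity|].
  rewrite Nat.iter_succ_r. simpl Nat.iter at 2. rewrite parent_child. apply IH.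
Qed.

Definition omega_le (a k b l : nat) : Prop := a <= b /\ Nat.iter (b - a) parent k = l.

Lemma iter_parent_split a b c w : c <= a -> a <= b ->
  Nat.iter (b - c) parent w = Nat.iter (b - a) parent (Nat.iter (a - c) parent w).
Proof. intros H1 H2. rewrite <- Nat.iter_add. f_equal. lia. Qed.

Lemma omega_le_refl a k : omega_le a k a k.
Proof. split; [lia|]. rewrite Nat.sub_diag. reflexivity. Qed.

Lemma omega_le_antisym a k b l : omega_le a k b l -> omega_le b l a k -> a = b /\ k = l.
Proof.
  intros [H1 H2] [H3 _]. assert (a = b) by lia. subst b.
  rewrite Nat.sub_diag in H2. auto.
Qed.

Lemma omega_le_trans a k b l c m : omega_le a k b l -> omega_le b l c m -> omega_le a k c m.
Proof.
  intros [H1 H2] [H3 H4]. split; [lia|].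
  rewrite (iter_parent_split b c a k H1 H3). congruence.
Qed.

Lemma omega_le_level a k b l : omega_le a k b l -> ~ (a = b /\ k = l) -> a < b.
Proof.
  intros [H1 H2] Hne. destruct (Nat.eq_dec a b) as [->|]; [|lia].
  rewrite Nat.sub_diag in H2. exfalso. auto.
Qed.

Lemma omega_le_tree c w a k b l :
  omega_le c w a k -> omega_le c w b l -> omega_le a k b l \/ omega_le b l a k.
Proof.
  intros [H1 H2] [H3 H4].
  destruct (Nat.le_ge_cases a b) as [Hab|Hab]; [left|right]; split; auto;
    rewrite <- H4, <- H2; symmetry; apply iter_parent_split; auto.
Qed.

Lemma omega_le_infinite a b l : a < b ->
  exists f : nat -> nat, Injective f /\ forall x, omega_le a (f x) b l.
Proof.
  intros Hab. exists (fun x => child x (Nat.iter (b - a - 1) (child 0) l)). split.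
  - intros x y H. eapply child_inj; eauto.
  - intros x. split; [lia|]. remember (b - a - 1) as d eqn:Hd.
    replace (b - a) with (S d) by lia.
    rewrite Nat.iter_succ_r, parent_child. apply iter_parent_child.
Qed.

Lemma omega_key_separated j e j' e' b l :
  omega_le j (cpair (S e) 0) b l -> omega_le j' (cpair (S e') 0) b l -> e = e'.
Proof.
  intros [_ H] [_ H']. apply (f_equal tag) in H, H'. rewrite tag_iter_parent in H, H'.
  unfold tag in H, H'. rewrite of_nat_cpair in H, H'. simpl in H, H'. congruence.
Qed.

Lemma omega_keys_infinite a (g : nat -> nat) : Injective g ->
  exists f : nat -> nat, Injective f /\
    forall x, exists j, omega_le a (f x) j (cpair (S (g j)) 0).
Proof.
  intros _. exists (fun x => child x (cpair (S (g (S a))) 0)). split.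
  - intros x y H. eapply child_inj; eauto.
  - intros x. exists (S a). split; [lia|]. replace (S a - a) with 1 by lia.
    apply parent_child.
Qed.

Lemma omega_le_successor a b : succH Nat.lt a b -> forall c w l,
  omega_le c w b l -> ~ (c = b /\ w = l) -> exists k, omega_le c w a k /\ omega_le a k b l.
Proof.
  intros [Hab Hno] c w l Hle Hne.
  assert (Hb : b = S a) by (apply NNPP; intros Hb; apply Hno; exists (S a); lia). subst b.
  pose proof (omega_le_level _ _ _ _ Hle Hne) as Hc. destruct Hle as [_ H].
  exists (Nat.iter (a - c) parent w). split; [split; [lia|reflexivity]|].
  split; [lia|]. rewrite <- H. symmetry. apply iter_parent_split; lia.
Qed.

Lemma omega_no_maximal_level a : (forall b, ~ a < b) -> forall b, b = a.
Proof. intros Hmax. exfalso. apply (Hmax (S a)). lia. Qed.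

Definition omega_tree : LevelTree := {|
  lvl := nat; lvl_lt := Nat.lt; nle := omega_le;
  key_lvl := fun j => j; key_code := fun e => cpair (S e) 0;
  lvl_lt_irrefl := Nat.lt_irrefl;
  nle_refl := omega_le_refl;
  nle_antisym := omega_le_antisym;
  nle_trans := omega_le_trans;
  nle_level := omega_le_level;
  nle_tree := omega_le_tree;
  nle_infinite := omega_le_infinite;
  key_separated := omega_key_separated;
  keys_infinite := omega_keys_infinite;
  nle_successor := omega_le_successor;
  maximal_level_unique := omega_no_maximal_level |}.

(* The level tree over 1: a single level of isolated nodes, the key node of
   key [e] being node [e]. *)
Definition one_tree : LevelTree := {|
  lvl := unit; lvl_lt := fun _ _ => False; nle := fun _ k _ l => k = l;
  key_lvl := fun _ => tt; key_code := fun e => e;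
  lvl_lt_irrefl := fun _ H => H;
  nle_refl := fun _ _ => eq_refl;
  nle_antisym := ltac:(intros [] k [] l H _; auto);
  nle_trans := ltac:(intros; simpl in *; congruence);
  nle_level := ltac:(intros [] k [] l H Hne; apply Hne; auto);
  nle_tree := ltac:(intros; simpl in *; left; congruence);
  nle_infinite := fun _ _ _ H => False_ind _ H;
  key_separated := ltac:(intros; simpl in *; congruence);
  keys_infinite :=
    ltac:(intros a g Hg; exists g; split; [exact Hg|]; intros x; exists x; reflexivity);
  nle_successor := ltac:(intros a b [[] _]);
  maximal_level_unique := ltac:(intros [] _ []; reflexivity) |}.

Lemma inhabited_of_uncountable {T : Type} : uncountable_type T -> inhabited T.
Proof.
  intros H. apply NNPP. intros Hempty. apply H. exists (fun _ => 0).
  intros x. exfalso. apply Hempty. constructor. exact x.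
Qed.

Theorem proposition3p5 (Lam : Type) (HLam : uncountable_type Lam)
    (W : Type) (ltW : W -> W -> Prop) (HW : is_omega1 ltW) :
  adequate ltW Lam ->
  adequate Nat.lt Lam /\ adequate (fun _ _ : unit => False) Lam.
Proof.
  intros Hadq.
  destruct HW as [_ [_ [_ [_ [HWunc _]]]]].
  destruct (inhabited_of_uncountable HWunc) as [w0].
  destruct (inhabited_of_uncountable HLam) as [z0].
  destruct (adequate_separating w0 Hadq) as [chi Hsep].
  split.
  - exact (construction_adequate _ chi omega_tree Hsep z0).
  - exact (construction_adequate _ chi one_tree Hsep z0).
Qed.
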